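(* For every integer $n\ge1$ and every $u\in V$, the normalizing factor satisfies $Z_u<\dfrac{1}{\ln(n+1)}$.
   Context: For an integer $n\ge1$, the $n$-octahedral graph $G'_n=(V,E')$ is the undirected graph with vertex set $V=\{u\in\mathbb{Z}^3:|u_1|+|u_2|+|u_3|=n\}$ and edge set $E'=\{\{v,w\}\subset V: v\neq w,\ |v_i-w_i|\le 1 \text{ for all } i=1,2,3\}$. For $u,v\in V$, $d_{uv}$ denotes the shortest-path (number of edges) distance between $u$ and $v$ in $G'_n$. For $u\in V$, $Z_u=\left(\sum_{w\in V\setminus\{u\}} d_{uw}^{-2}\right)^{-1}$. *)

From Stdlib Require Import Reals ZArith List Lia ClassicalEpsilon.
Import ListNotations.
Open Scope R_scope.

Definition pt := (Z * Z * Z)%type.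
Definition c1 (v : pt) : Z := fst (fst v).
Definition c2 (v : pt) : Z := snd (fst v).
Definition c3 (v : pt) : Z := snd v.

Definition inV (n : nat) (v : pt) : Prop :=
  (Z.abs (c1 v) + Z.abs (c2 v) + Z.abs (c3 v) = Z.of_nat n)%Z.

Definition zrange (n : nat) : list Z :=
  map (fun k => (Z.of_nat k - Z.of_nat n)%Z) (seq 0 (2 * n + 1)).
Definition Vlist (n : nat) : list pt :=
  filter (fun v => Z.eqb (Z.abs (c1 v) + Z.abs (c2 v) + Z.abs (c3 v)) (Z.of_nat n))
    (list_prod (list_prod (zrange n) (zrange n)) (zrange n)).

Definition edge (n : nat) (v w : pt) : Prop :=
  inV n v /\ inV n w /\ v <> w /\
  (Z.abs (c1 v - c1 w) <= 1)%Z /\ (Z.abs (c2 v - c2 w) <= 1)%Z /\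
  (Z.abs (c3 v - c3 w) <= 1)%Z.

Inductive walk (n : nat) : nat -> pt -> pt -> Prop :=
| walk0 : forall v, walk n 0 v v
| walkS : forall k u v w, edge n u v -> walk n k v w -> walk n (S k) u w.

Definition is_dist (n : nat) (u w : pt) (k : nat) : Prop :=
  walk n k u w /\ forall j, (j < k)%nat -> ~ walk n j u w.

(* d_{uw}: the shortest-path distance (G'_n is connected, so it exists) *)
Definition dist (n : nat) (u w : pt) : nat :=
  epsilon (inhabits 0%nat) (is_dist n u w).

Definition pt_eqb (v w : pt) : bool :=
  (Z.eqb (c1 v) (c1 w) && Z.eqb (c2 v) (c2 w) && Z.eqb (c3 v) (c3 w))%bool.

Definition Zu (n : nat) (u : pt) : R :=
  / fold_right Rplus 0
      (map (fun w => / (INR (dist n u w)) ^ 2)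
         (filter (fun w => negb (pt_eqb w u)) (Vlist n))).

(** If [|u1| >= n/3], then for [1 <= i <= |u1|] and [0 <= j <= i] the point
    obtained from [u] by moving [i] steps towards [0] in the first coordinate,
    [j] steps away from [0] in the second and [i - j] in the third is a vertex
    at distance at most [i] from [u].  These points are distinct, so
    [1/Z_u >= sum_(i=1)^(|u1|) (i+1)/i^2 > ln (3|u1| + 1) >= ln (n+1)].
    Permuting coordinates reduces the general case to this one. *)

From Stdlib Require Import Reals ZArith List Lia Lra Permutation Classical_Prop ClassicalEpsilon.
Open Scope R_scope.

Definition sumR (l : list R) : R := fold_right Rplus 0 l.

Lemma sumR_app l1 l2 : sumR (l1 ++ l2) = sumR l1 + sumR l2.
Proof. induction l1 as [|x l1 IH]; unfold sumR in *; cbn; [lra | rewrite IH; lra]. Qed.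

Lemma sumR_perm l1 l2 : Permutation l1 l2 -> sumR l1 = sumR l2.
Proof. induction 1; unfold sumR in *; cbn; lra. Qed.

Section Lists.
Context {A : Type}.

Lemma sumR_filter (f : A -> R) (p : A -> bool) l :
  sumR (map f l) = sumR (map f (filter p l)) + sumR (map f (filter (fun x => negb (p x)) l)).
Proof.
  induction l as [|a l IH]; cbn; [unfold sumR; cbn; lra|].
  destruct (p a); cbn; unfold sumR in *; cbn; rewrite IH; lra.
Qed.

Lemma sumR_le (f f' : A -> R) l : (forall x, In x l -> f x <= f' x) ->
  sumR (map f l) <= sumR (map f' l).
Proof.
  induction l as [|a l IH]; intros H; unfold sumR in *; cbn; [lra|].
  pose proof (H a (or_introl eq_refl)).
  pose proof (IH (fun x Hx => H x (or_intror Hx))). lra.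
Qed.

Lemma sumR_ge0 (f : A -> R) l : (forall x, In x l -> 0 <= f x) -> 0 <= sumR (map f l).
Proof.
  induction l as [|a l IH]; intros H; unfold sumR in *; cbn; [lra|].
  pose proof (H a (or_introl eq_refl)).
  pose proof (IH (fun x Hx => H x (or_intror Hx))). lra.
Qed.

Lemma sumR_const_le (f : A -> R) c l : (forall x, In x l -> c <= f x) ->
  INR (length l) * c <= sumR (map f l).
Proof.
  induction l as [|a l IH]; intros H; unfold sumR in *; cbn [map fold_right length]; [cbn; lra|].
  rewrite S_INR. pose proof (H a (or_introl eq_refl)).
  pose proof (IH (fun x Hx => H x (or_intror Hx))). lra.
Qed.

Lemma sumR_flat_map {B} (f : B -> R) (F : A -> list B) l :
  sumR (map f (flat_map F l)) = sumR (map (fun x => sumR (map f (F x))) l).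
Proof.
  induction l as [|a l IH]; cbn; [reflexivity|].
  rewrite map_app, sumR_app, IH. reflexivity.
Qed.

Lemma sumR_incl (eq_dec : forall x y : A, {x = y} + {x <> y}) (g : A -> R) l m :
  NoDup l -> NoDup m -> incl m l -> (forall x, In x l -> 0 <= g x) ->
  sumR (map g m) <= sumR (map g l).
Proof.
  intros Hl Hm Hinc Hg.
  set (p := fun x => if in_dec eq_dec x m then true else false).
  rewrite (sumR_filter g p l).
  assert (Hperm : Permutation (filter p l) m).
  { apply NoDup_Permutation; [now apply NoDup_filter | assumption |].
    intros x. rewrite filter_In. unfold p.
    destruct (in_dec eq_dec x m); split; intuition; discriminate. }
  rewrite (sumR_perm _ _ (Permutation_map g Hperm)).
  assert (0 <= sumR (map g (filter (fun x => negb (p x)) l))).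
  { apply sumR_ge0. intros x Hx. apply filter_In in Hx. apply Hg; tauto. }
  lra.
Qed.

Lemma NoDup_flat_map_map {B C} (P : A -> B -> C) (L : A -> list B) l :
  (forall x y x' y', P x y = P x' y' -> x = x' /\ y = y') ->
  NoDup l -> (forall x, NoDup (L x)) ->
  NoDup (flat_map (fun x => map (P x) (L x)) l).
Proof.
  intros HP Hl HL. induction Hl as [|a l Ha Hl IH]; cbn; [constructor|].
  apply NoDup_app; auto.
  - apply FinFun.Injective_map_NoDup; auto. intros y y' E. now apply HP in E.
  - intros z Hz Hz'. apply in_map_iff in Hz as [y [<- _]].
    apply in_flat_map in Hz' as [x [Hx Hz']]. apply in_map_iff in Hz' as [y' [E _]].
    apply HP in E as [-> _]. contradiction.
Qed.

End Lists.

Lemma NoDup_list_prod {A B} (l : list A) (l' : list B) :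
  NoDup l -> NoDup l' -> NoDup (list_prod l l').
Proof.
  intros. rewrite list_prod_as_flat_map.
  apply (NoDup_flat_map_map pair (fun _ => l')); auto.
  intros x y x' y' E. now injection E.
Qed.

Definition shell_sum (a : nat) : R :=
  sumR (map (fun i => INR (S i) / INR i ^ 2) (seq 1 a)).

Lemma ln_sub_le x y : 0 < x -> 0 < y -> ln y - ln x <= (y - x) / x.
Proof.
  intros Hx Hy.
  replace y with (x * (y / x)) at 1 by (field; lra).
  rewrite ln_mult by (try apply Rdiv_lt_0_compat; lra).
  pose proof (exp_ineq1_le (ln (y / x))) as Hexp.
  rewrite exp_ln in Hexp by (apply Rdiv_lt_0_compat; lra).
  replace ((y - x) / x) with (y / x - 1) by (field; lra). lra.
Qed.

Lemma ln_4_lt_2 : ln 4 < 2.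
Proof.
  assert (He : 2 < exp 1) by (pose proof (exp_ineq1 1); lra).
  assert (4 < exp 2) by (replace 2 with (1 + 1) by lra; rewrite exp_plus; nra).
  rewrite <- (ln_exp 2). apply ln_increasing; lra.
Qed.

Lemma ln_lt_shell_sum a : (1 <= a)%nat -> ln (3 * INR a + 1) < shell_sum a.
Proof.
  induction a as [|a IH]; intros Ha; [lia|].
  destruct (Nat.eq_dec a 0) as [->|Hne].
  - cbn. unfold shell_sum, sumR; cbn.
    replace (3 * 1 + 1) with 4 by lra. pose proof ln_4_lt_2. lra.
  - specialize (IH ltac:(lia)).
    unfold shell_sum in *. rewrite seq_S, map_app, sumR_app.
    replace (1 + a)%nat with (S a) by lia. unfold sumR at 2; cbn [map fold_right].
    rewrite !S_INR in *.
    assert (Ha1 : 1 <= INR a) by (apply (le_INR 1); lia).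
    set (x := INR a) in *.
    (* ln (3x+4) - ln (3x+1) <= 3/(3x+1) <= (x+2)/(x+1)^2, the latter since x >= 1 *)
    pose proof (ln_sub_le (3 * x + 1) (3 * (x + 1) + 1) ltac:(lra) ltac:(lra)).
    assert ((3 * (x + 1) + 1 - (3 * x + 1)) / (3 * x + 1) <= (x + 1 + 1) / (x + 1) ^ 2).
    { apply Rmult_le_reg_r with ((3 * x + 1) * (x + 1) ^ 2); [nra|].
      field_simplify; lra. }
    lra.
Qed.

Lemma walk_snoc n k u v w : walk n k u v -> edge n v w -> walk n (S k) u w.
Proof.
  induction 1; intros He.
  - apply walkS with w; [exact He | constructor].
  - apply walkS with v; auto.
Qed.

Lemma walk_map n (s : pt -> pt) :
  (forall v w, edge n v w -> edge n (s v) (s w)) ->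
  forall k u w, walk n k u w -> walk n k (s u) (s w).
Proof. intros Hs k u w. induction 1; [constructor | econstructor; eauto]. Qed.

Lemma is_dist_dist n u w k : walk n k u w -> is_dist n u w (dist n u w).
Proof.
  intros Hw. unfold dist. apply epsilon_spec.
  induction k as [k IH] using lt_wf_ind.
  destruct (classic (exists j, (j < k)%nat /\ walk n j u w)) as [[j [Hj Hw']]|Hno].
  - exact (IH j Hj Hw').
  - exists k. split; auto. intros j Hj Hw'. apply Hno; eauto.
Qed.

Lemma inv_sq_dist_ge n u w k : walk n k u w -> u <> w ->
  / INR k ^ 2 <= / INR (dist n u w) ^ 2.
Proof.
  intros Hw Hne. destruct (is_dist_dist n u w k Hw) as [Hd Hmin].
  assert (Hpos : dist n u w <> 0%nat) by (intros E; rewrite E in Hd; now inversion Hd).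
  assert (Hle : (dist n u w <= k)%nat).
  { destruct (le_lt_dec (dist n u w) k) as [|Hlt]; auto. now destruct (Hmin k Hlt). }
  apply Rinv_le_contravar.
  - apply pow_lt, (lt_INR 0). lia.
  - apply pow_incr. split; [apply pos_INR | now apply le_INR].
Qed.

Definition inv_sq_sum (n : nat) (u : pt) : R :=
  sumR (map (fun w => / INR (dist n u w) ^ 2)
            (filter (fun w => negb (pt_eqb w u)) (Vlist n))).

Lemma pt_eq_dec (x y : pt) : {x = y} + {x <> y}.
Proof. repeat decide equality. Qed.

Lemma pt_eqb_neq v w : v <> w -> pt_eqb v w = false.
Proof.
  destruct v as [[x y] z], w as [[x' y'] z']. unfold pt_eqb, c1, c2, c3; cbn.
  intros H. destruct (Z.eqb_spec x x'), (Z.eqb_spec y y'), (Z.eqb_spec z z'); auto.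
  subst. congruence.
Qed.

Lemma zrange_NoDup n : NoDup (zrange n).
Proof.
  apply FinFun.Injective_map_NoDup_in; [|apply seq_NoDup].
  intros x y _ _ E. lia.
Qed.

Lemma in_zrange n z : (- Z.of_nat n <= z <= Z.of_nat n)%Z -> In z (zrange n).
Proof.
  intros H. apply in_map_iff. exists (Z.to_nat (z + Z.of_nat n)).
  split; [lia|]. apply in_seq. lia.
Qed.

Lemma Vlist_NoDup n : NoDup (Vlist n).
Proof. apply NoDup_filter. repeat apply NoDup_list_prod; apply zrange_NoDup. Qed.

Lemma in_Vlist n v : inV n v -> In v (Vlist n).
Proof.
  destruct v as [[x y] z]. unfold inV, c1, c2, c3; cbn. intros H.
  apply filter_In. split.
  - apply in_prod; [apply in_prod|]; apply in_zrange; lia.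
  - apply Z.eqb_eq. cbn. lia.
Qed.

Lemma inv_sq_ge0 x : 0 <= / x ^ 2.
Proof.
  destruct (Req_dec x 0) as [->|Hx].
  - replace (0 ^ 2) with 0 by ring. rewrite Rinv_0. lra.
  - apply Rlt_le, Rinv_0_lt_compat. nra.
Qed.

Lemma inv_sq_sum_ge n u (m : list pt) :
  NoDup m -> (forall w, In w m -> inV n w /\ w <> u) ->
  sumR (map (fun w => / INR (dist n u w) ^ 2) m) <= inv_sq_sum n u.
Proof.
  intros Hm Hin. apply sumR_incl; auto using pt_eq_dec, inv_sq_ge0.
  - apply NoDup_filter, Vlist_NoDup.
  - intros w Hw. destruct (Hin w Hw). apply filter_In.
    split; [now apply in_Vlist | now rewrite pt_eqb_neq].
Qed.

(* Block [i] consists of [i+1] vertices within distance [i] of [u]. *)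
Lemma shell_sum_le_inv_sq_sum n u (P : nat -> nat -> pt) a :
  (forall i j i' j', P i j = P i' j' -> i = i' /\ j = j') ->
  (forall i j, (1 <= i <= a)%nat -> (j <= i)%nat ->
     inV n (P i j) /\ P i j <> u /\ walk n i u (P i j)) ->
  shell_sum a <= inv_sq_sum n u.
Proof.
  intros Hinj HP.
  set (m := flat_map (fun i => map (P i) (seq 0 (S i))) (seq 1 a)).
  apply Rle_trans with (sumR (map (fun w => / INR (dist n u w) ^ 2) m)).
  - unfold m, shell_sum. rewrite sumR_flat_map.
    apply sumR_le. intros i Hi. apply in_seq in Hi. rewrite map_map.
    replace (INR (S i)) with (INR (length (seq 0 (S i)))) by now rewrite length_seq.
    apply sumR_const_le. intros j Hj. apply in_seq in Hj.
    destruct (HP i j ltac:(lia) ltac:(lia)) as (_ & Hne & Hw).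
    apply (inv_sq_dist_ge n u _ i Hw). congruence.
  - apply inv_sq_sum_ge.
    + apply NoDup_flat_map_map; auto using seq_NoDup.
    + intros w Hw. apply in_flat_map in Hw as [i [Hi Hw]].
      apply in_map_iff in Hw as [j [<- Hj]]. apply in_seq in Hi, Hj.
      destruct (HP i j ltac:(lia) ltac:(lia)) as (? & ? & _). auto.
Qed.

(* The unit step away from [0]; either sign works at [0]. *)
Definition outward (z : Z) : Z := if (z <? 0)%Z then (-1)%Z else 1%Z.

Definition fan (u : pt) (i j : nat) : pt :=
  ((c1 u - outward (c1 u) * Z.of_nat i, c2 u + outward (c2 u) * Z.of_nat j)%Z,
    (c3 u + outward (c3 u) * (Z.of_nat i - Z.of_nat j))%Z).

Ltac outward_cases :=
  unfold outward; repeat match goal with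
  | |- context [(?z <? 0)%Z] => destruct (Z.ltb_spec z 0)
  end.

Lemma fan_inj u i j i' j' : fan u i j = fan u i' j' -> i = i' /\ j = j'.
Proof.
  destruct u as [[x y] z]. unfold fan, c1, c2, c3; cbn [fst snd]. intros E. injection E.
  outward_cases; lia.
Qed.

Lemma fan_0 u : fan u 0 0 = u.
Proof. destruct u as [[x y] z]. unfold fan, c1, c2, c3; cbn [fst snd]. f_equal; [f_equal|]; lia. Qed.

Lemma fan_neq u i j : (1 <= i)%nat -> fan u i j <> u.
Proof. intros Hi E. rewrite <- (fan_0 u) in E at 2. apply fan_inj in E. lia. Qed.

Lemma fan_inV n u i j : inV n u -> (j <= i)%nat -> (Z.of_nat i <= Z.abs (c1 u))%Z ->
  inV n (fan u i j).
Proof.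
  destruct u as [[x y] z]. unfold inV, fan, c1, c2, c3; cbn [fst snd]. intros.
  outward_cases; lia.
Qed.

Lemma fan_edge n u i j j' : inV n u -> (j <= i)%nat -> (Z.of_nat (S i) <= Z.abs (c1 u))%Z ->
  (j <= j' <= S j)%nat -> (j' <= S i)%nat -> edge n (fan u i j) (fan u (S i) j').
Proof.
  intros HV Hji Hi Hj Hj'.
  split; [apply fan_inV; auto; lia |].
  split; [apply fan_inV; auto |].
  split; [intros E; apply fan_inj in E; lia |].
  destruct u as [[x y] z]. unfold fan, c1, c2, c3; cbn [fst snd].
  outward_cases; repeat split; lia.
Qed.

Lemma fan_walk n u i j : inV n u -> (j <= i)%nat -> (Z.of_nat i <= Z.abs (c1 u))%Z ->
  walk n i u (fan u i j).
Proof.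
  intros HV. revert j. induction i as [|i IH]; intros j Hj Hi.
  - replace j with 0%nat by lia. rewrite fan_0. constructor.
  - destruct (Nat.eq_dec j (S i)) as [->|Hne].
    + apply walk_snoc with (fan u i i); [apply IH | apply fan_edge]; auto; lia.
    + apply walk_snoc with (fan u i j); [apply IH | apply fan_edge]; auto; lia.
Qed.

Definition swap12 (v : pt) : pt := ((c2 v, c1 v), c3 v).
Definition swap13 (v : pt) : pt := ((c3 v, c2 v), c1 v).

Definition octa_symmetry (n : nat) (s : pt -> pt) : Prop :=
  (forall v, s (s v) = v) /\ (forall v, inV n v -> inV n (s v)) /\
  (forall v w, edge n v w -> edge n (s v) (s w)).

Ltac prove_octa_symmetry :=
  unfold octa_symmetry; split; [|split];
  [ intros [[? ?] ?]; reflexivity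
  | intros [[? ?] ?]; unfold inV, swap12, swap13, c1, c2, c3; cbn; lia
  | intros [[a1 a2] a3] [[b1 b2] b3] (H1 & H2 & H3 & H4 & H5 & H6);
    unfold edge, inV, swap12, swap13, c1, c2, c3 in *; cbn in *;
    repeat split; try lia;
    intros E; apply H3; injection E; intros; subst; reflexivity ].

Lemma octa_symmetry_id n : octa_symmetry n (fun v => v).
Proof. unfold octa_symmetry. auto. Qed.

Lemma octa_symmetry_swap12 n : octa_symmetry n swap12.
Proof. prove_octa_symmetry. Qed.

Lemma octa_symmetry_swap13 n : octa_symmetry n swap13.
Proof. prove_octa_symmetry. Qed.

Lemma exists_octa_symmetry_large_c1 n u : inV n u ->
  exists s, octa_symmetry n s /\ (Z.of_nat n <= 3 * Z.abs (c1 (s u)))%Z.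
Proof.
  destruct u as [[x y] z]. unfold inV, c1, c2, c3; cbn [fst snd]. intros HV.
  destruct (Z_le_gt_dec (Z.of_nat n) (3 * Z.abs x)).
  { exists (fun v => v). split; [apply octa_symmetry_id | assumption]. }
  destruct (Z_le_gt_dec (Z.of_nat n) (3 * Z.abs y)).
  { exists swap12. split; [apply octa_symmetry_swap12 | assumption]. }
  exists swap13. split; [apply octa_symmetry_swap13 | unfold swap13, c1, c2, c3; cbn [fst snd]; lia].
Qed.

(* The fan of [s u], carried back to [u] by the involution [s]. *)
Lemma shell_sum_le_inv_sq_sum_sym n s u : octa_symmetry n s -> inV n u ->
  shell_sum (Z.to_nat (Z.abs (c1 (s u)))) <= inv_sq_sum n u.
Proof.
  intros (Hinv & HsV & HsE) HV.
  assert (HV' : inV n (s u)) by auto.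
  apply (shell_sum_le_inv_sq_sum n u (fun i j => s (fan (s u) i j))).
  - intros i j i' j' E. apply (f_equal s) in E. rewrite !Hinv in E. now apply fan_inj in E.
  - intros i j Hi Hj. repeat split.
    + apply HsV, fan_inV; auto. lia.
    + intros E. apply (f_equal s) in E. rewrite Hinv in E. now apply (fan_neq (s u) i j).
    + rewrite <- (Hinv u) at 1. apply walk_map; auto. apply fan_walk; auto. lia.
Qed.

Theorem lemma3 (n : nat) (u : pt) :
  (1 <= n)%nat -> inV n u -> Zu n u < / ln (INR n + 1).
Proof.
  intros Hn HV.
  destruct (exists_octa_symmetry_large_c1 n u HV) as [s [Hs Hc1]].
  set (a := Z.to_nat (Z.abs (c1 (s u)))).
  assert (Hna : (n <= 3 * a)%nat) by lia.
  assert (Hln_pos : 0 < ln (INR n + 1)).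
  { rewrite <- ln_1. apply ln_increasing; [lra|]. apply (le_INR 1) in Hn. cbn in Hn. lra. }
  assert (Hln_le : ln (INR n + 1) <= ln (3 * INR a + 1)).
  { apply le_INR in Hna. rewrite mult_INR in Hna. cbn in Hna.
    replace (1 + 1 + 1) with 3 in Hna by ring.
    destruct (Rle_lt_or_eq_dec _ _ Hna) as [Hlt | ->]; [| lra].
    apply Rlt_le, ln_increasing; [pose proof (pos_INR n) |]; lra. }
  pose proof (ln_lt_shell_sum a ltac:(lia)).
  assert (shell_sum a <= inv_sq_sum n u) by exact (shell_sum_le_inv_sq_sum_sym n s u Hs HV).
  change (Zu n u) with (/ inv_sq_sum n u).
  apply Rinv_lt_contravar; [apply Rmult_lt_0_compat |]; lra.
Qed.
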